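(* For every positive integer $n$, the map sending a minimal cover $\{S_1,\dots,S_k\}$ of $[n]$ to the undirected graph on $[n]$ in which distinct $v,w$ are adjacent iff $v,w\in S_i$ for some $i$, is a bijection from the set of minimal covers of $[n]$ onto the set of UEC-representatives on vertex set $[n]$.
   Context: A minimal cover of a finite set $S$ is a collection $\{S_1,\dots,S_k\}$ of nonempty subsets of $S$ such that for $T\subseteq[k]$ we have $\bigcup_{i\in T}S_i=S$ iff $T=[k]$. For a DAG $\mathcal{D}$, a trek is a path with no repeated vertices and no collider; the unconditional dependence graph $\mathcal{U}^\mathcal{D}$ is the undirected graph on the nodes of $\mathcal{D}$ in which distinct $v,w$ are adjacent iff there is a trek between them. An undirected graph on $[n]$ is a UEC-representative if it equals $\mathcal{U}^\mathcal{D}$ for some DAG $\mathcal{D}$ on $[n]$. *)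

From mathcomp Require Import all_boot.
Set Implicit Arguments. Unset Strict Implicit. Unset Printing Implicit Defensive.

(* An undirected (simple) graph on 'I_n is represented by its edge set:
   a set of 2-element subsets of 'I_n. *)
Definition simple_graph n (G : {set {set 'I_n}}) : Prop :=
  forall e, e \in G -> #|e| = 2.

Definition dag n (D : rel 'I_n) : Prop :=
  forall x y, D x y -> ~~ connect D y x.

Fixpoint no_collider n (D : rel 'I_n) (s : seq 'I_n) : bool :=
  match s with
  | a :: ((b :: c :: _) as t) => ~~ (D a b && D c b) && no_collider D t
  | _ => true
  end.

Definition trek n (D : rel 'I_n) (v w : 'I_n) : Prop :=
  exists p : seq 'I_n,
    [/\ path (fun a b => D a b || D b a) v p, last v p = w,
        uniq (v :: p) & no_collider D (v :: p)].

Definition is_udg n (D : rel 'I_n) (G : {set {set 'I_n}}) : Prop :=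
  simple_graph G /\
  forall v w : 'I_n, v != w -> ([set v; w] \in G <-> trek D v w).

Definition UEC_rep n (G : {set {set 'I_n}}) : Prop :=
  exists D : rel 'I_n, dag D /\ is_udg D G.

Definition min_cover n (C : {set {set 'I_n}}) : bool :=
  (set0 \notin C) &&
  [forall A : {set {set 'I_n}},
      (A \subset C) ==> ((cover A == [set: 'I_n]) == (A == C))].

Definition cover_graph n (C : {set {set 'I_n}}) : {set {set 'I_n}} :=
  [set e : {set 'I_n} | (#|e| == 2) && [exists S in C, e \subset S]].

(* In a DAG two vertices are joined by a trek iff they have a common ancestor,
   and every vertex lies below a source.  Hence U^D is the graph of the cover of
   [n] by the descendant sets of the sources, a minimal cover since each source
   lies in its own descendant set only.  Conversely, each member S of a minimal
   cover has a private element x_S lying in no other member, and the depth-one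
   DAG with edges x_S -> y for y in S realises the cover graph.  Injectivity:
   in the cover graph the closed neighbourhood of x_S is exactly S. *)

From mathcomp Require Import all_boot.
Set Implicit Arguments. Unset Strict Implicit. Unset Printing Implicit Defensive.

Section PathFacts.

Variables (T : finType) (e : rel T).

Lemma connect_to_last x p y : path e x p -> y \in x :: p -> connect e y (last x p).
Proof.
move=> e_p y_p; case/splitPl: p / y_p e_p => p1 p2 <-.
by rewrite cat_path last_cat => /andP[_ e_p2]; apply/connectP; exists p2.
Qed.

Lemma connect_uniq_path x y : connect e x y ->
  exists p, [/\ path e x p, last x p = y & uniq (x :: p)].
Proof. by case/connectP=> p /shortenP[p' ? ? _] ->; exists p'. Qed.

Lemma path_last_hit (P : pred T) x p : path e x p -> P x ->
  exists u q, [/\ P u, path e u q, last u q = last x p & all (predC P) q].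
Proof.
elim/last_ind: p => [|p z IHp]; first by move=> _ Px; exists x, [::].
rewrite rcons_path last_rcons => /andP[e_p e_z] Px.
case Pz: (P z); first by exists z, [::].
have [u [q [Pu e_q lastq Pq]]] := IHp e_p Px.
exists u, (rcons q z); split; rewrite ?last_rcons //.
  by rewrite rcons_path e_q lastq.
by rewrite all_rcons /= Pz.
Qed.

End PathFacts.

Section Treks.

Variables (n : nat) (D : rel 'I_n).

Local Notation adj := (fun a b => D a b || D b a).

Lemma collider_free_forward a b p : D a b -> path adj b p ->
  no_collider D [:: a, b & p] -> connect D a (last b p).
Proof.
elim: p a b => [|c p IHp] a b Dab /=; first by move=> _ _; apply: connect1.
case/andP=> adj_bc adj_p /andP[not_coll nc_p].
have Dbc : D b c by move: adj_bc not_coll; rewrite Dab; case: (D b c) => //= ->.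
exact: connect_trans (connect1 Dab) (IHp b c Dbc adj_p nc_p).
Qed.

Lemma trek_common_ancestor v w : trek D v w ->
  exists t, connect D t v && connect D t w.
Proof.
case=> p [adj_p <- _ nc_p]; elim: p v adj_p nc_p => [|b p IHp] v /=.
  by move=> _ _; exists v; rewrite connect0.
case/andP=> adj_vb adj_p nc_p.
have nc_bp : no_collider D (b :: p) by case: p nc_p {adj_p IHp} => //= c p /andP[].
have [t /andP[tb tw]] := IHp b adj_p nc_bp.
case/orP: adj_vb => [Dvb | Dbv].
  by exists v; rewrite connect0 (collider_free_forward Dvb adj_p nc_p).
by exists t; rewrite tw (connect_trans tb (connect1 Dbv)).
Qed.

Hypothesis dagD : dag D.

Lemma dag_asym x y : D x y -> ~~ D y x.
Proof. by move=> Dxy; apply: contra (dagD Dxy); apply: connect1. Qed.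

Lemma directed_no_collider u q : path D u q -> no_collider D (u :: q).
Proof.
elim: q u => [|b [|c q] IHq] u // /andP[_ D_bq].
have -> : no_collider D [:: u, b, c & q] =
  ~~ (D u b && D c b) && no_collider D [:: b, c & q] by [].
rewrite (IHq b D_bq) andbT; case/andP: D_bq => Dbc _.
by rewrite (negbTE (dag_asym Dbc)) andbF.
Qed.

Lemma catrev_directed b r s : path D b r ->
  sorted adj (b :: s) -> no_collider D (b :: s) ->
  sorted adj (catrev r (b :: s)) /\ no_collider D (catrev r (b :: s)).
Proof.
elim: r b s => [|x r IHr] b s //= /andP[Dbx D_r] adj_s nc_s.
apply: IHr D_r _ _; first by rewrite /= adj_s Dbx orbT.
by case: s adj_s nc_s => //= c s _ ->; rewrite (negbTE (dag_asym Dbx)).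
Qed.

Lemma trek_directed_paths u r q : path D u r -> path D u q ->
  uniq (u :: r) -> uniq (u :: q) -> ~~ has (mem r) q ->
  trek D (last u r) (last u q).
Proof.
move=> D_r D_q uniq_r uniq_q disj.
have adj_q : sorted adj (u :: q) by apply: sub_path D_q => a b ->.
have [adj_s nc_s] := catrev_directed D_r adj_q (directed_no_collider D_q).
have uniq_s : uniq (catrev r (u :: q)).
  move: uniq_r uniq_q; rewrite catrevE cat_uniq rev_uniq /= mem_rev.
  by case/andP=> /negbTE-> -> /andP[-> ->]; rewrite (eq_has (mem_rev r)) disj.
have [p def_s] : exists p, catrev r (u :: q) = last u r :: p.
  case/lastP: (r) => [|r' v]; first by exists q.
  by exists (catrev r' (u :: q)); rewrite !catrevE rev_rcons last_rcons.
exists p; rewrite -def_s; split=> //; first by move: adj_s; rewrite def_s.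
by have := congr1 (last u) def_s; rewrite catrevE last_cat /= => <-.
Qed.

(* On a directed path t ~> w take the last vertex u that is still an ancestor
   of v: the directed paths u ~> v and u ~> w then meet only at u. *)
Lemma common_ancestor_trek t v w : connect D t v -> connect D t w -> trek D v w.
Proof.
move=> tv tw; have [q0 [D_q0 last_q0 _]] := connect_uniq_path tw.
have [u [q1 [uv D_q1 last_q1 q1_ok]]] := path_last_hit (P := (connect D)^~ v) D_q0 tv.
have [q [D_q uniq_q last_q q_ok]] : exists q, [/\ path D u q, uniq (u :: q),
    last u q = w & all (fun y => ~~ connect D y v) q].
  rewrite -last_q0 -last_q1; case: (shortenP D_q1) => q D_q uniq_q sub_q.
  by exists q; split=> //; apply/allP=> y /sub_q /(allP q1_ok).
have [r [D_r last_r uniq_r]] := connect_uniq_path uv.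
rewrite -last_r -last_q; apply: trek_directed_paths => //.
apply/hasPn=> y /(allP q_ok) /= y_not_anc; apply: contra y_not_anc => y_r.
by rewrite -last_r connect_to_last // mem_behead.
Qed.

Lemma trek_common_ancestorP v w :
  trek D v w <-> exists t, connect D t v && connect D t w.
Proof.
split; first exact: trek_common_ancestor.
by case=> t /andP[tv tw]; apply: common_ancestor_trek tv tw.
Qed.

End Treks.

Section MinCover.

Variable n : nat.
Implicit Types (C : {set {set 'I_n}}) (S : {set 'I_n}).

Definition private_in C S x := (x \in S) && [forall S' in C, (x \in S') ==> (S' == S)].

Lemma private_inP C S x : private_in C S x ->
  forall S', S' \in C -> x \in S' -> S' = S.
Proof.
move=> /andP[_ /forall_inP priv] S' S'C xS'.
by apply/eqP; move/implyP: (priv S' S'C); apply.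
Qed.

Lemma min_coverP C : reflect
  (cover C = [set: 'I_n] /\ {in C, forall S, exists x, private_in C S x})
  (min_cover C).
Proof.
apply: (iffP andP) => [[_ /forallP minC] | [covC privC]].
  have covC : cover C = [set: 'I_n].
    by have := minC C; rewrite subxx eqxx implyTb eqb_id => /eqP.
  split=> // S SC; have /implyP := minC (C :\ S); rewrite subD1set.
  have -> : (C :\ S == C) = false.
    by apply/negbTE/eqP => /setP/(_ S); rewrite !inE eqxx SC.
  move/(_ isT); rewrite eqbF_neg eqEsubset subsetT => /subsetPn[x _ x_notin].
  have only_S S' : S' \in C -> x \in S' -> S' = S.
    move=> S'C xS'; apply/eqP; apply: contraNT x_notin => S'S.
    by apply/bigcupP; exists S'; rewrite ?inE ?S'S.
  have /bigcupP[S0 S0C xS0] : x \in cover C by rewrite covC.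
  have xS : x \in S by rewrite -(only_S S0 S0C xS0).
  exists x; rewrite /private_in xS; apply/forall_inP=> S' S'C.
  by apply/implyP=> /(only_S S' S'C) ->.
split.
  by apply/negP=> /privC[x /andP[]]; rewrite inE.
apply/forallP=> A; apply/implyP=> AC; case: (eqVneq A C) => [-> | neAC].
  by rewrite covC eqxx.
rewrite eqbF_neg; apply: contra neAC => /eqP covA.
rewrite eqEsubset AC /=.
apply/subsetP=> S SC; have [x privx] := privC S SC.
have /bigcupP[S' S'A xS'] : x \in cover A by rewrite covA.
by rewrite -(private_inP privx (subsetP AC S' S'A) xS').
Qed.

Lemma cover_graph_simple C : simple_graph (cover_graph C).
Proof. by move=> e; rewrite inE => /andP[/eqP]. Qed.

Lemma mem_cover_graph2 C v w : v != w ->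
  ([set v; w] \in cover_graph C) = [exists S in C, (v \in S) && (w \in S)].
Proof.
move=> neq_vw; rewrite inE cards2 neq_vw /=.
by apply: eq_existsb => S; rewrite subUset !sub1set.
Qed.

Lemma simple_graph_eq (G G' : {set {set 'I_n}}) : simple_graph G -> simple_graph G' ->
  (forall v w, v != w -> ([set v; w] \in G) = ([set v; w] \in G')) -> G = G'.
Proof.
move=> simG simG' eqG; apply/setP=> e.
case: (boolP (#|e| == 2)) => [/cards2P[v [w [neq_vw ->]]] | not2]; first exact: eqG.
by apply/idP/idP=> [/simG | /simG'] /eqP; rewrite (negbTE not2).
Qed.

Definition closed_nbhd (G : {set {set 'I_n}}) x :=
  [set y | (y == x) || ([set x; y] \in G)].

Lemma sub_closed_nbhd_cover_graph C S x : S \in C -> x \in S ->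
  S \subset closed_nbhd (cover_graph C) x.
Proof.
move=> SC xS; apply/subsetP=> y yS; rewrite inE.
have [// | neq_yx] := eqVneq y x.
by rewrite mem_cover_graph2 1?eq_sym //; apply/existsP; exists S; rewrite SC xS yS.
Qed.

Lemma closed_nbhd_private C S x : S \in C -> private_in C S x ->
  closed_nbhd (cover_graph C) x = S.
Proof.
move=> SC privx; have xS : x \in S by case/andP: privx.
apply/eqP; rewrite eqEsubset sub_closed_nbhd_cover_graph // andbT.
apply/subsetP=> y; rewrite inE; have [-> // | neq_yx] := eqVneq y x.
rewrite mem_cover_graph2 1?eq_sym // => /exists_inP[S' S'C /andP[xS' yS']].
by rewrite -(private_inP privx S'C xS').
Qed.

Lemma min_cover_cover_graph_sub C1 C2 : min_cover C1 -> min_cover C2 ->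
  cover_graph C1 = cover_graph C2 -> C1 \subset C2.
Proof.
case/min_coverP=> _ priv1 /min_coverP[cov2 priv2] eqG; apply/subsetP=> S SC1.
have [x privx] := priv1 S SC1.
have /bigcupP[S' S'C2 xS'] : x \in cover C2 by rewrite cov2.
have [x' privx'] := priv2 S' S'C2.
have sub_S'S : S' \subset S.
  by rewrite -(closed_nbhd_private SC1 privx) eqG sub_closed_nbhd_cover_graph.
have sub_SS' : S \subset S'.
  rewrite -(closed_nbhd_private S'C2 privx') -eqG sub_closed_nbhd_cover_graph //.
  by apply: (subsetP sub_S'S); case/andP: privx'.
suff -> : S = S' by [].
by apply/eqP; rewrite eqEsubset sub_SS' sub_S'S.
Qed.

End MinCover.

Lemma is_udg_cover_graph n (D : rel 'I_n) (C : {set {set 'I_n}}) :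
  (forall v w, v != w -> trek D v w <-> [exists S in C, (v \in S) && (w \in S)]) ->
  is_udg D (cover_graph C).
Proof.
move=> trekC; split=> [|v w neq_vw]; first exact: cover_graph_simple.
by rewrite mem_cover_graph2 //; apply: iff_sym; apply: trekC.
Qed.

Lemma is_udg_uniq n (D : rel 'I_n) (G G' : {set {set 'I_n}}) :
  is_udg D G -> is_udg D G' -> G = G'.
Proof.
move=> [simG trekG] [simG' trekG']; apply: simple_graph_eq => // v w neq_vw.
have [trek_v_G trek_v_G'] := (trekG v w neq_vw, trekG' v w neq_vw).
by apply/idP/idP=> [/trek_v_G/trek_v_G' | /trek_v_G'/trek_v_G].
Qed.

Section SourceCover.

Variables (n : nat) (D : rel 'I_n).

Definition source s := [forall y, ~~ D y s].

Definition descendants s := [set x | connect D s x].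

Definition source_cover := [set descendants s | s in source].

Lemma source_connect s x : source s -> connect D x s -> x = s.
Proof.
move=> /forallP src_s /connectP[p D_p]; case/lastP: p D_p => [_ -> // | p y].
rewrite rcons_path last_rcons => /andP[_ D_y] def_s.
by have := src_s (last x p); rewrite def_s D_y.
Qed.

Hypothesis dagD : dag D.

(* An ancestor of v with fewest ancestors is a source. *)
Lemma exists_source_ancestor v : exists2 s, source s & connect D s v.
Proof.
pose ancestors t := [set x | connect D x t].
have [s sv s_min] :=
  @arg_minnP _ v (fun t => connect D t v) (fun t => #|ancestors t|) (connect0 D v).
exists s => //; apply/forallP=> y; apply/negP=> Dys.
have lt_anc : ancestors y \proper ancestors s.
  apply/properP; split; last by exists s; rewrite !inE ?connect0 ?(dagD Dys).
  by apply/subsetP=> x; rewrite !inE => /connect_trans; apply; apply: connect1.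
by have := s_min y (connect_trans (connect1 Dys) sv); rewrite leqNgt proper_card.
Qed.

Lemma source_cover_common v w : (exists t, connect D t v && connect D t w) <->
  [exists S in source_cover, (v \in S) && (w \in S)].
Proof.
split=> [[t /andP[tv tw]] | /exists_inP[_ /imsetP[s _ ->]]].
  have [s src_s st] := exists_source_ancestor t.
  apply/exists_inP; exists (descendants s); first exact: imset_f.
  by rewrite !inE (connect_trans st tv) (connect_trans st tw).
by rewrite !inE => /andP[sv sw]; exists s; rewrite sv sw.
Qed.

Lemma source_cover_min : min_cover source_cover.
Proof.
apply/min_coverP; split.
  apply/setP=> v; rewrite inE; have [s src_s sv] := exists_source_ancestor v.
  by apply/bigcupP; exists (descendants s); rewrite ?imset_f ?inE.
move=> _ /imsetP[s src_s ->]; exists s; rewrite /private_in inE connect0.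
apply/forall_inP=> _ /imsetP[s' _ ->]; apply/implyP.
by rewrite inE => /(source_connect src_s) ->.
Qed.

Lemma is_udg_source_cover : is_udg D (cover_graph source_cover).
Proof.
apply: is_udg_cover_graph => v w _.
exact: iff_trans (trek_common_ancestorP dagD v w) (source_cover_common v w).
Qed.

End SourceCover.

Section PrivateDag.

Variables (n : nat) (C : {set {set 'I_n}}).

Definition private_rep S := [pick x | private_in C S x].

Definition private_dag : rel 'I_n :=
  fun x y => (x != y) && [exists S in C, (private_rep S == Some x) && (y \in S)].

Lemma private_rep_private S x : private_rep S = Some x -> private_in C S x.
Proof. by rewrite /private_rep; case: pickP => // x' priv_x' [<-]. Qed.

Lemma private_dag_edge x y : private_dag x y ->
  exists2 S, S \in C & [/\ private_rep S = Some x, x \in S & y \in S].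
Proof.
case/andP=> _ /exists_inP[S SC /andP[/eqP rep_x yS]]; exists S => //.
by split=> //; case/andP: (private_rep_private rep_x).
Qed.

Lemma private_dag_sink x y z : private_dag x y -> ~~ private_dag y z.
Proof.
move=> Dxy; apply/negP=> /private_dag_edge[S' S'C [rep_y _ _]].
have [S SC [rep_x _ yS]] := private_dag_edge Dxy.
have eq_SS' := private_inP (private_rep_private rep_y) SC yS.
rewrite eq_SS' rep_y in rep_x; case: rep_x => eq_yx.
by move: Dxy; rewrite eq_yx /private_dag eqxx.
Qed.

Lemma private_dag_connect t v : connect private_dag t v -> t = v \/ private_dag t v.
Proof.
case/connectP=> [[|x [|y p]]] /= => [_ -> | /andP[Dtx _] -> | /and3P[Dtx Dxy _] _].
- by left.
- by right.
- by have := private_dag_sink y Dtx; rewrite Dxy.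
Qed.

Lemma private_dag_dag : dag private_dag.
Proof.
move=> x y Dxy; apply/negP=> /private_dag_connect[eq_yx | Dyx].
  by move: Dxy; rewrite eq_yx /private_dag eqxx.
by have := private_dag_sink x Dxy; rewrite Dyx.
Qed.

Lemma private_rep_connect S t v : S \in C -> private_rep S = Some t ->
  connect private_dag t v -> v \in S.
Proof.
move=> SC rep_t /private_dag_connect[<- | /private_dag_edge[S' S'C [_ tS' vS']]].
  by case/andP: (private_rep_private rep_t).
by rewrite -(private_inP (private_rep_private rep_t) S'C tS').
Qed.

Hypothesis minC : min_cover C.

Lemma private_dag_common v w : v != w ->
  (exists t, connect private_dag t v && connect private_dag t w) <->
  [exists S in C, (v \in S) && (w \in S)].
Proof.
move=> neq_vw; split=> [[t /andP[tv tw]] |].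
  have [S SC rep_t] : exists2 S, S \in C & private_rep S = Some t.
    case: (private_dag_connect tv) => [eq_tv | /private_dag_edge[S SC [rep_t _ _]]].
      case: (private_dag_connect tw) => [eq_tw | /private_dag_edge[S SC [rep_t _ _]]].
        by rewrite -eq_tv -eq_tw eqxx in neq_vw.
      by exists S.
    by exists S.
  by apply/exists_inP; exists S; rewrite // !(private_rep_connect SC rep_t).
case/exists_inP=> S SC /andP[vS wS].
have [x rep_x] : exists x, private_rep S = Some x.
  rewrite /private_rep; case: pickP => [x _ | no_priv]; first by exists x.
  by case/min_coverP: minC => _ /(_ S SC)[x]; rewrite no_priv.
have rep_connect y : y \in S -> connect private_dag x y.
  move=> yS; have [<- | neq_xy] := eqVneq x y; first exact: connect0.
  apply: connect1; rewrite /private_dag neq_xy.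
  by apply/exists_inP; exists S; rewrite // rep_x eqxx.
by exists x; rewrite !rep_connect.
Qed.

Lemma is_udg_private_dag : is_udg private_dag (cover_graph C).
Proof.
apply: is_udg_cover_graph => v w neq_vw.
exact: iff_trans (trek_common_ancestorP private_dag_dag v w) (private_dag_common neq_vw).
Qed.

End PrivateDag.

Theorem proposition2p13 (n : nat) : 0 < n ->
  {in [pred C | min_cover C] &, injective (@cover_graph n)} /\
  (forall G : {set {set 'I_n}},
      UEC_rep G <-> exists2 C, min_cover C & cover_graph C = G).
Proof.
move=> _; split=> [C1 C2 min1 min2 eqG | G].
  by apply/eqP; rewrite eqEsubset !min_cover_cover_graph_sub.
split=> [[D [dagD udgG]] | [C minC <-]].
  exists (source_cover D); first exact: source_cover_min.
  exact: is_udg_uniq (is_udg_source_cover dagD) udgG.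
by exists (private_dag C); split; [apply: private_dag_dag | apply: is_udg_private_dag].
Qed.
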